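(* Let $\Phi:\mathbb{R}^n\to(-\infty,\infty]$ be a proper lower semicontinuous convex function. Then there exists a lower semicontinuous convex function $\tilde\varphi:[0,\infty)\times\mathbb{R}^n\to(-\infty,\infty]$ such that $\tilde\varphi(0,y)=\Phi(y)$ for all $y\in\mathbb{R}^n$, $\tilde\varphi(x,y)\in\mathbb{R}$ for all $x>0$, $y\in\mathbb{R}^n$, for each $y$ the map $x\mapsto\tilde\varphi(x,y)$ is strictly decreasing on $(0,\infty)$, and $\lim_{x\to0+}\tilde\varphi(x,y)=\Phi(y)$ for each $y\in\mathbb{R}^n$.
   Context: A convex function $\Phi:\mathbb{R}^n\to(-\infty,\infty]$ is proper if it is not identically $+\infty$. *)

From HB Require Import structures.
From mathcomp Require Import all_boot all_order all_algebra.
From mathcomp Require Import all_classical all_reals all_analysis.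
Set Implicit Arguments. Unset Strict Implicit. Unset Printing Implicit Defensive.
Import Order.TTheory GRing.Theory Num.Theory.
Import numFieldNormedType.Exports.
Local Open Scope classical_set_scope.
Local Open Scope ring_scope.

(* Lower semicontinuity of an extended-real valued function relative to a
   set D (i.e. lower semicontinuity of the restriction f|_D for the subspace
   topology on D). *)
Definition lsc_within {X : topologicalType} {R : numFieldType}
  (D : set X) (f : X -> \bar R) :=
  forall x, D x -> forall a : R, (a%:E < f x)%E ->
    \forall z \near x, D z -> (a%:E < f z)%E.

Definition econvex_on {R : realType} {E : lmodType R}
  (D : set E) (f : E -> \bar R) :=
  forall x y (t : R), D x -> D y -> 0 < t -> t < 1 ->
    (f (t *: x + (1 - t) *: y)%R <= t%:E * f x + (1 - t)%:E * f y)%E.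

Definition eproper {T : Type} {R : numDomainType} (f : T -> \bar R) :=
  (forall x, f x != -oo%E) /\ exists x, f x != +oo%E.

From HB Require Import structures.
From mathcomp Require Import all_boot all_order all_algebra.
From mathcomp Require Import all_classical all_reals all_analysis.
From mathcomp Require Import ring lra.
Import Order.TTheory GRing.Theory Num.Theory.
Import numFieldNormedType.Exports.
Local Open Scope classical_set_scope.
Local Open Scope ring_scope.
Set Implicit Arguments. Unset Strict Implicit. Unset Printing Implicit Defensive.

(* The extension is the Moreau envelope of Phi with parameter x, shifted down by x:
     phi (x, y) = inf_z (Phi z + |y - z|^2 / x) - x  for x > 0,   phi (0, y) = Phi y.
   Joint convexity in (x, y) comes from convexity of the perspective (x, a) |-> a^2 / x,
   and since the envelope is nonincreasing in x, subtracting x makes it strictly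
   decreasing. A proper lsc convex function is bounded below on a compact ball, and
   convexity propagates this bound to a cone z |-> m - B |z - z0| below Phi. The cone
   makes the envelope finite and, as x -> 0, makes the points z far from y irrelevant
   in the infimum, so lower semicontinuity of Phi at y gives both the limit at x = 0
   and lower semicontinuity of phi on the boundary. In the open half-space phi is
   convex and locally bounded above, hence lower semicontinuous. *)

Lemma lte_fin_dense (R : realFieldType) (a : R) (u : \bar R) :
  (a%:E < u)%E -> exists2 a', a < a' & (a'%:E < u)%E.
Proof.
case: u => [c| |] // h; last by exists (a + 1); rewrite ?ltey // ltrDl.
by rewrite lte_fin in h; exists ((a + c) / 2); rewrite ?lte_fin; lra.
Qed.

Lemma lsc_compact_bounded_below (R : realType) (T : topologicalType)
    (f : T -> \bar R) (A : set T) :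
  compact A -> lower_semicontinuous f -> (forall x, f x != -oo%E) ->
  exists m : R, forall z, A z -> (m%:E < f z)%E.
Proof.
move=> cA flsc fNy.
have : \forall M \near +oo%R, A `<=` (fun z => ((- M)%:E < f z)%E).
  apply: (proj1 (compact_near_coveringP A) cA) => x Ax.
  have [a ha] : exists a : R, (a%:E < f x)%E.
    move: (fNy x); case: (f x) => [r _| _|//].
      by exists (r - 1); rewrite lte_fin ltrBlDr ltrDl.
    by exists 0; rewrite ltey.
  have [V Vx HV] := flsc _ _ ha.
  exists (V, [set M : R | - a < M]); first split => //=.
    by exists (- a); split; [exact: num_real | move=> M HM].
  case=> z M [/= Vz HM]; apply: le_lt_trans (HV _ Vz).
  by rewrite lee_fin lerNl ltW.
move=> [M0 [_ HM]]; exists (- (M0 + 1)) => z Az.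
by apply: HM Az; rewrite ltrDl.
Qed.

Lemma closed_ball_rV_compact (R : realType) n (z0 : 'rV[R]_n) (r : R) :
  0 < r -> compact (closed_ball z0 r).
Proof.
move=> r0; apply: bounded_closed_compact; last exact: closed_ball_closed.
exists (`|z0| + r); split; first exact: num_real.
move=> M /ltW leM x; rewrite closed_ballE //= => zx; apply: le_trans leM.
by rewrite -[x](subKr z0) (le_trans (ler_normB _ _)) // lerD2l.
Qed.

Lemma convex_cone_minorant (R : realType) (E : normedModType R)
    (f : E -> \bar R) (z0 : E) (f0 m : R) :
  econvex_on setT f -> f z0 = f0%:E ->
  (forall z, `|z0 - z| <= 1 -> (m%:E < f z)%E) ->
  forall z, ((m - (f0 - m) * `|z - z0|)%:E <= f z)%E.
Proof.
move=> fcvx fz0 fball z.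
have mf0 : m < f0 by rewrite -lte_fin -fz0 fball // subrr normr0.
have [le_r1|lt1r] := leP `|z - z0| 1.
  apply: le_trans (ltW (fball z _)); last by rewrite distrC.
  by rewrite lee_fin lerBlDr lerDl mulr_ge0 // subr_ge0 ltW.
set r := `|z - z0| in lt1r *.
have r0 : 0 < r by apply: lt_trans lt1r.
have t0 : 0 < r^-1 by rewrite invr_gt0.
have t1 : r^-1 < 1 by rewrite invf_lt1.
have on_sphere : `|z0 - (r^-1 *: z + (1 - r^-1) *: z0)| <= 1.
  have -> : z0 - (r^-1 *: z + (1 - r^-1) *: z0) = r^-1 *: (z0 - z).
    by rewrite scalerBl scale1r !scalerBr opprD opprB addrCA subrKC addrC.
  by rewrite normrZ gtr0_norm // distrC mulVf ?gt_eqF.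
have := lt_le_trans (fball _ on_sphere) (fcvx z z0 _ I I t0 t1).
rewrite fz0; case: (f z) => [p| |]; last 2 first.
- by rewrite leey.
- by rewrite gt0_muleNy // addNye.
rewrite -!EFinM -EFinD lte_fin lee_fin.
have -> : r^-1 * p + (1 - r^-1) * f0 = (p + (r - 1) * f0) / r.
  by field; rewrite gt_eqF.
rewrite ltr_pdivlMr //; nra.
Qed.

Lemma midpoint_reflect (R : numFieldType) (V : lmodType R) (c p : V) :
  2^-1 *: p + (1 - 2^-1) *: (2 *: c - p) = c.
Proof.
have -> : 1 - 2^-1 = 2^-1 :> R by rewrite {1}(splitr 1) mul1r addrK.
by rewrite -scalerDr addrC subrK scalerA mulVf ?scale1r ?pnatr_eq0.
Qed.

Lemma sqr_div_subM_ge (R : realFieldType) (B x s : R) :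
  0 < x -> - (B ^+ 2 * x / 4) <= s ^+ 2 / x - B * s.
Proof.
move=> x0; have -> : s ^+ 2 / x - B * s = (s - B * x / 2) ^+ 2 / x - B ^+ 2 * x / 4.
  by field; rewrite gt_eqF.
by rewrite lerDr divr_ge0 ?sqr_ge0 ?ltW.
Qed.

Lemma ler_norm_combB (R : realFieldType) (E : normedModType R) (t : R)
    (y1 y2 z1 z2 : E) : 0 <= t -> t <= 1 ->
  `|(t *: y1 + (1 - t) *: y2) - (t *: z1 + (1 - t) *: z2)|
    <= t * `|y1 - z1| + (1 - t) * `|y2 - z2|.
Proof.
move=> t0 t1; rewrite opprD addrACA -!scalerBr.
by apply: le_trans (ler_normD _ _) _; rewrite !normrZ !ger0_norm // subr_ge0.
Qed.

(* Junk value 0 for x <= 0: it is only ever used at x = 0 together with a = 0. *)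
Definition sqr_persp (R : realFieldType) (x a : R) := if 0 < x then a ^+ 2 / x else 0.

Lemma sqr_persp_convex (R : realFieldType) (t x1 x2 a1 a2 : R) :
  0 < t -> t < 1 -> 0 <= x1 -> 0 <= x2 ->
  (x1 = 0 -> a1 = 0) -> (x2 = 0 -> a2 = 0) -> 0 < t * x1 + (1 - t) * x2 ->
  (t * a1 + (1 - t) * a2) ^+ 2 / (t * x1 + (1 - t) * x2)
    <= t * sqr_persp x1 a1 + (1 - t) * sqr_persp x2 a2.
Proof.
move=> t0 t1 x10 x20 a10 a20 X0; rewrite /sqr_persp.
have t1' : 0 < 1 - t by rewrite subr_gt0.
have [x1p|x1n] := ltP 0 x1; have [x2p|x2n] := ltP 0 x2.
- rewrite ler_pdivrMr //.
  have -> : (t * (a1 ^+ 2 / x1) + (1 - t) * (a2 ^+ 2 / x2)) * (t * x1 + (1 - t) * x2)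
      = (t * a1 + (1 - t) * a2) ^+ 2 + t * (1 - t) * (a1 * x2 - a2 * x1) ^+ 2 / (x1 * x2).
    by field; rewrite ?gt_eqF ?mulr_gt0.
  rewrite lerDl; apply: divr_ge0; last by rewrite mulr_ge0 ?ltW.
  by apply: mulr_ge0 (sqr_ge0 _); rewrite mulr_ge0 ?ltW.
- have x2z : x2 = 0 by apply/le_anti/andP.
  rewrite (a20 x2z) x2z !mulr0 !addr0 in X0 *.
  suff -> : (t * a1) ^+ 2 / (t * x1) = t * (a1 ^+ 2 / x1) by [].
  by field; rewrite ?gt_eqF.
- have x1z : x1 = 0 by apply/le_anti/andP.
  rewrite (a10 x1z) x1z !mulr0 !add0r in X0 *.
  suff -> : ((1 - t) * a2) ^+ 2 / ((1 - t) * x2) = (1 - t) * (a2 ^+ 2 / x2) by [].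
  by field; rewrite ?gt_eqF.
- have x1z : x1 = 0 by apply/le_anti/andP.
  have x2z : x2 = 0 by apply/le_anti/andP.
  by rewrite x1z x2z !mulr0 addr0 ltxx in X0.
Qed.

Section shifted_envelope.
Variables (R : realType) (E : normedModType R) (Phi : E -> \bar R).

Definition env_cost x (y z : E) := (Phi z + (`|y - z| ^+ 2 / x)%:E)%E.
Definition env x y := ereal_inf (range (env_cost x y)).
Definition envr x y := fine (env x y).
Definition shifted_env (p : R * E) :=
  if p.1 <= 0 then Phi p.2 else (env p.1 p.2 - p.1%:E)%E.

Variables (z0 : E) (f0 m B : R).
Hypothesis Phi_z0 : Phi z0 = f0%:E.
Hypothesis B_ge0 : 0 <= B.
Hypothesis Phi_ge_cone : forall z, ((m - B * `|z - z0|)%:E <= Phi z)%E.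

Lemma env_cost_ge x y z : 0 < x ->
  ((m - B * `|y - z0| - B ^+ 2 * x / 4)%:E <= env_cost x y z)%E.
Proof.
move=> x0; rewrite /env_cost; move: (Phi_ge_cone z); case: (Phi z) => [p| |] //.
  rewrite -EFinD !lee_fin => hp.
  have := ler_wpM2l B_ge0 (ler_distD y z z0); rewrite [`|z - y|]distrC.
  have := sqr_div_subM_ge B `|y - z| x0; lra.
by move=> _; rewrite addye // leey.
Qed.

Lemma env_le_cost x y z : (env x y <= env_cost x y z)%E.
Proof. by apply: ereal_inf_lbound; exists z. Qed.

Lemma env_fin_num x y : 0 < x -> env x y \is a fin_num.
Proof.
move=> x0; rewrite fin_numElt; apply/andP; split.
  apply: (@lt_le_trans _ _ (m - B * `|y - z0| - B ^+ 2 * x / 4)%:E); first exact: ltNyr.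
  by apply: le_ereal_inf_tmp => _ [z _ <-]; exact: env_cost_ge.
by apply: le_lt_trans (env_le_cost x y z0) _; rewrite /env_cost Phi_z0 -EFinD ltry.
Qed.

Lemma envE x y : 0 < x -> env x y = (envr x y)%:E.
Proof. by move=> x0; rewrite /envr fineK // env_fin_num. Qed.

Lemma shifted_env0 y : shifted_env (0, y) = Phi y.
Proof. by rewrite /shifted_env /= lexx. Qed.

Lemma shifted_envE x y : 0 < x -> shifted_env (x, y) = (envr x y - x)%:E.
Proof. by move=> x0; rewrite /shifted_env /= leNgt x0 /= envE. Qed.

Lemma envr_ge x y a : 0 < x -> (forall z, (a%:E <= env_cost x y z)%E) ->
  a <= envr x y.
Proof.
move=> x0 H; rewrite -lee_fin -envE //.
by apply: le_ereal_inf_tmp => _ [z _ <-]; exact: H.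
Qed.

Lemma envr_le x y z c : 0 < x -> Phi z = c%:E ->
  envr x y <= c + `|y - z| ^+ 2 / x.
Proof. by move=> x0 Pz; rewrite -lee_fin -envE // EFinD -Pz; exact: env_le_cost. Qed.

Lemma envr_approx x y e : 0 < x -> 0 < e -> exists z c, Phi z = c%:E /\
  c + `|y - z| ^+ 2 / x < envr x y + e.
Proof.
move=> x0 e0; have [_ [z _ <-]] := lb_ereal_inf_adherent e0 (env_fin_num y x0).
rewrite /env_cost -/(env x y) envE //; move: (Phi_ge_cone z).
case Pz: (Phi z) => [c| |] // _; rewrite -!EFinD lte_fin => h.
by exists z, c.
Qed.

Lemma envr_nonincreasing x1 x2 y : 0 < x1 -> x1 <= x2 -> envr x2 y <= envr x1 y.
Proof.
move=> x10 x12; have x20 := lt_le_trans x10 x12.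
apply: envr_ge => // z; rewrite -envE //; apply: le_trans (env_le_cost x2 y z) _.
by rewrite leeD // lee_fin ler_wpM2l ?sqr_ge0 // lef_pV2 ?posrE.
Qed.

Lemma shifted_env_fin_num x y : 0 < x -> shifted_env (x, y) \is a fin_num.
Proof. by move=> x0; rewrite shifted_envE. Qed.

Lemma shifted_env_neqNy p : 0 <= p.1 -> shifted_env p != -oo%E.
Proof.
case: p => x y /=; rewrite le_eqVlt => /predU1P[<-|x0]; last by rewrite shifted_envE.
rewrite shifted_env0; apply/negP => /eqP Phiy.
by have := Phi_ge_cone y; rewrite Phiy leeNy_eq.
Qed.

Lemma shifted_env_decr y x1 x2 : 0 < x1 -> x1 < x2 ->
  (shifted_env (x2, y) < shifted_env (x1, y))%E.
Proof.
move=> x10 x12; rewrite !shifted_envE ?(lt_trans x10 x12) // lte_fin.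
by have := envr_nonincreasing y x10 (ltW x12); lra.
Qed.

Lemma shifted_env_approx x y c e : 0 <= x -> shifted_env (x, y) = c%:E -> 0 < e ->
  exists z d, [/\ Phi z = d%:E, (x = 0 -> z = y) & d + sqr_persp x `|y - z| <= c + x + e].
Proof.
rewrite le_eqVlt => /predU1P[<-|x0] Pc e0.
  exists y, c; rewrite -shifted_env0 /sqr_persp ltxx.
  by split => //; rewrite !addr0 lerDl ltW.
move: Pc; rewrite shifted_envE // => -[<-].
have [z [d [Pz lt_de]]] := envr_approx y x0 e0.
exists z, d; split => //; first by move=> x00; rewrite x00 ltxx in x0.
by rewrite /sqr_persp x0 subrK ltW.
Qed.

Hypothesis Phi_convex : econvex_on setT Phi.

Lemma envr_le_comb (t x1 x2 : R) (y1 y2 z1 z2 : E) (d1 d2 : R) :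
  0 < t -> t < 1 -> 0 <= x1 -> 0 <= x2 -> 0 < t * x1 + (1 - t) * x2 ->
  (x1 = 0 -> z1 = y1) -> (x2 = 0 -> z2 = y2) -> Phi z1 = d1%:E -> Phi z2 = d2%:E ->
  envr (t * x1 + (1 - t) * x2) (t *: y1 + (1 - t) *: y2)
    <= t * (d1 + sqr_persp x1 `|y1 - z1|) + (1 - t) * (d2 + sqr_persp x2 `|y2 - z2|).
Proof.
move=> t0 t1 x10 x20 X0 z1y z2y Pz1 Pz2.
set z := t *: z1 + (1 - t) *: z2.
have := Phi_convex (x:=z1) (y:=z2) I I t0 t1; rewrite -/z Pz1 Pz2 -!EFinM -EFinD.
move: (Phi_ge_cone z); case Pz: (Phi z) => [dz| |] // _; rewrite lee_fin => le_dz.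
apply: le_trans (envr_le _ X0 Pz) _.
have a10 : x1 = 0 -> `|y1 - z1| = 0 by move=> /z1y->; rewrite subrr normr0.
have a20 : x2 = 0 -> `|y2 - z2| = 0 by move=> /z2y->; rewrite subrr normr0.
have := sqr_persp_convex t0 t1 x10 x20 a10 a20 X0.
have : `|t *: y1 + (1 - t) *: y2 - z| ^+ 2 / (t * x1 + (1 - t) * x2)
    <= (t * `|y1 - z1| + (1 - t) * `|y2 - z2|) ^+ 2 / (t * x1 + (1 - t) * x2).
  apply: ler_wpM2r; first by rewrite invr_ge0 ltW.
  have t1' : 0 <= 1 - t by rewrite subr_ge0 ltW.
  rewrite ler_sqr ?nnegrE ?addr_ge0 ?mulr_ge0 ?(ltW t0) //.
  exact: ler_norm_combB (ltW t0) (ltW t1).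
lra.
Qed.

Lemma shifted_env_convex : econvex_on [set p : R * E | 0 <= p.1] shifted_env.
Proof.
move=> [x1 y1] [x2 y2] t /= x10 x20 t0 t1.
have -> : t *: (x1, y1) + (1 - t) *: (x2, y2) =
  (t * x1 + (1 - t) * x2, t *: y1 + (1 - t) *: y2) by [].
have t1' : 0 < 1 - t by rewrite subr_gt0.
have [[x1z x2z]|X0] : (x1 = 0 /\ x2 = 0) \/ 0 < t * x1 + (1 - t) * x2.
  rewrite le_eqVlt in x10; rewrite le_eqVlt in x20.
  case/predU1P: x10 => [<-|x10]; case/predU1P: x20 => [<-|x20]; [by left|right..].
  - by rewrite mulr0 add0r mulr_gt0.
  - by rewrite mulr0 addr0 mulr_gt0.
  - by rewrite addr_gt0 ?mulr_gt0.
  by rewrite x1z x2z !mulr0 addr0 !shifted_env0; exact: Phi_convex.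
rewrite shifted_envE //.
move: (@shifted_env_neqNy (x1, y1) x10) (@shifted_env_neqNy (x2, y2) x20).
move: (@shifted_env_approx x1 y1) (@shifted_env_approx x2 y2).
case: (shifted_env (x1, y1)) => [c1| |]; case: (shifted_env (x2, y2)) => [c2| |] //;
  last 3 first.
- by move=> *; rewrite gt0_muley ?lte_fin // -EFinM addey ?leey.
- by move=> *; rewrite gt0_muley ?lte_fin // -EFinM addye ?leey.
- by move=> *; rewrite !gt0_muley ?lte_fin // addye ?leey.
move=> approx1 approx2 _ _; rewrite -!EFinM -EFinD lee_fin.
apply/ler_addgt0Pr => e e0.
have [z1 [d1 [Pz1 z1y le1]]] := approx1 c1 e x10 erefl e0.
have [z2 [d2 [Pz2 z2y le2]]] := approx2 c2 e x20 erefl e0.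
have := envr_le_comb t0 t1 x10 x20 X0 z1y z2y Pz1 Pz2.
have := ler_wpM2l (ltW t0) le1; have := ler_wpM2l (ltW t1') le2; lra.
Qed.

Lemma env_cost_far_ge (x : R) (y z : E) (rho : R) :
  0 < x -> 0 <= rho -> rho <= `|y - z| -> B * x <= rho ->
  ((m - B * `|y - z0| + rho * (rho / x - B))%:E <= env_cost x y z)%E.
Proof.
move=> x0 rho0 rho_le Bx_le; rewrite /env_cost.
move: (Phi_ge_cone z); case: (Phi z) => [p| |] //; last by rewrite addye ?leey.
rewrite -EFinD !lee_fin => le_p.
have := ler_wpM2l B_ge0 (ler_distD y z z0); rewrite [`|z - y|]distrC.
set r := `|y - z| in rho_le *.
(* [r -> r^2/x - B r] is nondecreasing for [r >= B x / 2] *)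
have : rho * (rho / x - B) <= r ^+ 2 / x - B * r.
  rewrite -subr_ge0.
  have -> : r ^+ 2 / x - B * r - rho * (rho / x - B) = (r - rho) * (r + rho - B * x) / x.
    by field; rewrite gt_eqF.
  by apply: divr_ge0 (ltW x0); apply: mulr_ge0; rewrite subr_ge0; lra.
lra.
Qed.

Hypothesis Phi_lsc : lower_semicontinuous Phi.

(* Near y, lower semicontinuity of Phi bounds the cost from below; far from y the cost
   blows up uniformly as x -> 0 by [env_cost_far_ge]. *)
Lemma shifted_env_gt_near0 y a : (a%:E < Phi y)%E -> exists2 d : R, 0 < d &
  forall (x : R) y', 0 < x -> x < d -> `|y - y'| < d -> (a%:E < shifted_env (x, y'))%E.
Proof.
move=> /lte_fin_dense[a' aa' a'_lt].
have [del del0 Phi_gt] : exists2 del, 0 < del &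
    forall z, `|y - z| < del -> (a'%:E < Phi z)%E.
  have [V /nbhs_ballP[del del0 ballV] HV] := Phi_lsc a'_lt.
  by exists del => // z yz; apply/HV/ballV; rewrite -ball_normE.
set rho := del / 2; have rho0 : 0 < rho by rewrite divr_gt0.
have del2 : del = rho + rho by rewrite /rho -splitr.
set K := a' - m + B * (`|y - z0| + rho).
pose d := Num.min (Num.min rho (rho ^+ 2 / (rho * B + `|K| + 1))) (a' - a).
have den0 : 0 < rho * B + `|K| + 1.
  by have := normr_ge0 K; have := mulr_ge0 (ltW rho0) B_ge0; lra.
exists d; first by rewrite !lt_min rho0 divr_gt0 ?exprn_gt0 // subr_gt0.
move=> x y' x0; rewrite !lt_min => /andP[/andP[_ x_lt] xa] /andP[/andP[yy' _] _].
rewrite shifted_envE // lte_fin; suff : a' <= envr x y' by lra.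
apply: envr_ge => // z; have [yz|yz] := ltP `|y - z| del.
  by apply: le_trans (ltW (Phi_gt z yz)) _; rewrite leeDl // lee_fin divr_ge0 ?sqr_ge0 ?ltW.
have rho_le : rho <= `|y' - z|.
  by have := ler_distD y' y z; lra.
have x_rho : rho ^+ 2 >= x * (rho * B + `|K| + 1) by rewrite -ler_pdivlMr // ltW.
have Bx_le : B * x <= rho.
  rewrite -(ler_pM2r rho0) -expr2; apply: le_trans x_rho.
  by have := normr_ge0 K; nra.
apply: le_trans (env_cost_far_ge x0 (ltW rho0) rho_le Bx_le); rewrite lee_fin.
have : rho * (rho / x - B) >= `|K| + 1.
  have -> : rho * (rho / x - B) = (rho ^+ 2 - x * rho * B) / x by field; rewrite gt_eqF.
  by rewrite ler_pdivlMr //; lra.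
have := ler_wpM2l B_ge0 (ler_distD y y' z0); rewrite [`|y' - y|]distrC.
have := ler_wpM2l B_ge0 (ltW yy'); have := ler_norm K; rewrite /K; lra.
Qed.

Lemma reflected_cost_cvg (x c : R) (y z : E) : 0 < x ->
  (fun q : R * E => c + `|(2 *: y - z) - q.2| ^+ 2 / (2 * x - q.1) - (2 * x - q.1))
    @ (x, y) --> c + `|y - z| ^+ 2 / x - x.
Proof.
move=> x0.
have cvg_refl1 : (fun q : R * E => 2 * x - q.1) @ (x, y) --> x.
  have e : 2 * x - x = x by ring.
  by rewrite -[X in _ --> X]e; apply: cvgB; [exact: cvg_cst|exact: cvg_fst].
have cvg_dist : (fun q : R * E => `|(2 *: y - z) - q.2|) @ (x, y) --> `|y - z|.
  have e : (2 *: y - z) - y = y - z by rewrite scaler_nat mulr2n addrAC addrK.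
  by rewrite -e; apply: cvg_norm; apply: cvgB; [exact: cvg_cst|exact: cvg_snd].
apply: cvgB => //; apply: cvgD; first exact: cvg_cst.
apply: cvgM; last by apply: cvgV; [rewrite gt_eqF|exact: cvg_refl1].
by under eq_fun do rewrite expr2; rewrite expr2; exact: cvgM.
Qed.

(* Convexity on the segment from (x', y') through (x, y) to its reflection turns the
   upper bound on the envelope near the reflected point into a lower bound near (x', y'). *)
Lemma shifted_env_lsc_pos (x : R) (y : E) (a : R) :
  0 < x -> (a%:E < shifted_env (x, y))%E ->
  \forall q \near (x, y), 0 <= q.1 -> (a%:E < shifted_env q)%E.
Proof.
move=> x0; rewrite shifted_envE // lte_fin => a_lt.
set e := (envr x y - x - a) / 2; have e0 : 0 < e by rewrite divr_gt0 // subr_gt0.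
have [z [c [Pz c_lt]]] := envr_approx y x0 e0.
move/cvgrPdist_lt: (@reflected_cost_cvg x c y z x0) => /(_ e e0) near_cost.
have cvg_x : (fun q : R * E => q.1) @ (x, y) --> x by exact: cvg_fst.
move/cvgrPdist_lt: cvg_x => /(_ x x0) near_x.
apply: filterS2 near_x near_cost => -[x' y'] /=.
rewrite !ltr_norml => /andP[x'_gt x'_lt] /andP[cost_lt _] _.
have x'0 : 0 < x' by lra.
have x''0 : 0 < 2 * x - x' by lra.
have mid : 2^-1 *: (x', y') + (1 - 2^-1) *: (2 * x - x', 2 *: y - y') = (x, y).
  exact: (midpoint_reflect (x, y) (x', y')).
have half_gt0 : 0 < 2^-1 :> R by rewrite invr_gt0.
have half_lt1 : 2^-1 < 1 :> R by rewrite invf_lt1 ?ltr1n.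
have := shifted_env_convex (x:=(x', y')) (y:=(2 * x - x', 2 *: y - y'))
  (ltW x'0) (ltW x''0) half_gt0 half_lt1; rewrite mid.
rewrite !shifted_envE // -!EFinM -EFinD lee_fin => le_mid.
have := envr_le (2 *: y - y') x''0 Pz; rewrite [2 *: y - y' - z]addrAC.
rewrite lte_fin; rewrite /e in c_lt cost_lt; lra.
Qed.

Lemma shifted_env_lsc : lsc_within [set p : R * E | 0 <= p.1] shifted_env.
Proof.
case=> x y /=; rewrite le_eqVlt => /predU1P[<-|x0] a a_lt; last first.
  exact: shifted_env_lsc_pos.
rewrite shifted_env0 in a_lt.
have [d d0 gt_near0] := shifted_env_gt_near0 a_lt.
have [V Vy gt_V] := Phi_lsc a_lt.
have cvg_x : (fun q : R * E => q.1) @ (0, y) --> 0 by exact: cvg_fst.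
have cvg_y : (fun q : R * E => q.2) @ (0, y) --> y by exact: cvg_snd.
have near_V : \forall q \near ((0 : R), y), V q.2 by apply: cvg_y.
move/cvgrPdist_lt: cvg_x => /(_ d d0) near_x.
move/cvgrPdist_lt: cvg_y => /(_ d d0) near_y.
apply: filterS2 near_V (filterI near_x near_y) => -[x' y'] /= Vy' [x'_lt y'_lt] x'0.
have [x'_le0|x'_gt0] := leP x' 0; first by rewrite /shifted_env /= x'_le0; exact: gt_V.
by apply: gt_near0 => //; move: x'_lt; rewrite sub0r normrN gtr0_norm.
Qed.

Lemma shifted_env_cvg0 y : (fun x => shifted_env (x, y)) @ (0 : R)^'+ --> Phi y.
Proof.
have gt_near0 a : (a%:E < Phi y)%E -> \forall x \near 0^'+, (a%:E < shifted_env (x, y))%E.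
  move=> /shifted_env_gt_near0[d d0 gt_d]; near=> x.
  apply: gt_d; last by rewrite subrr normr0.
    by near: x; exact: nbhs_right_gt.
  by near: x; exact: nbhs_right_lt.
move: (Phi_ge_cone y); case Py: (Phi y) => [r| |] // _; last first.
  by apply/cvgeyPgt => A; apply: gt_near0; rewrite Py ltey.
apply/fine_cvgP; split.
  by near=> x; apply: shifted_env_fin_num; near: x; exact: nbhs_right_gt.
apply/cvgrPdist_lt => e e0; have := gt_near0 (r - e); rewrite Py lte_fin ltrBlDr ltrDl.
move=> /(_ e0); apply: filter_app; near=> x => /=.
have x0 : 0 < x by near: x; exact: nbhs_right_gt.
have := envr_le y x0 Py; rewrite subrr normr0 expr0n /= mul0r addr0.
rewrite shifted_envE // lte_fin /= ltr_norml; lra.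
Unshelve. all: end_near.
Qed.

End shifted_envelope.

Unset Implicit Arguments.

Theorem proposition1 (R : realType) (n : nat) (Phi : 'rV[R]_n -> \bar R) :
  eproper Phi -> lower_semicontinuous Phi -> econvex_on setT Phi ->
  exists phi : R * 'rV[R]_n -> \bar R,
    [/\ (forall p, 0 <= p.1 -> phi p != -oo%E),
        lsc_within [set p : R * 'rV[R]_n | 0 <= p.1] phi &
        econvex_on [set p : R * 'rV[R]_n | 0 <= p.1] phi] /\
    [/\ (forall y, phi (0, y) = Phi y),
        (forall x y, 0 < x -> phi (x, y) \is a fin_num),
        (forall y x1 x2, 0 < x1 -> x1 < x2 -> (phi (x2, y) < phi (x1, y))%E) &
        (forall y, (fun x => phi (x, y)) @ (0:R)^'+ --> Phi y)].
Proof.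
move=> [Phi_neqNy [z0 Phi_z0_neqy]] Phi_lsc Phi_cvx.
have /esym Phi_z0 : (fine (Phi z0))%:E = Phi z0 by rewrite fineK // fin_numE Phi_neqNy.
set f0 := fine (Phi z0) in Phi_z0.
have [m ball_gt] := lsc_compact_bounded_below
  (closed_ball_rV_compact (z0 := z0) ltr01) Phi_lsc Phi_neqNy.
have {}ball_gt z : `|z0 - z| <= 1 -> (m%:E < Phi z)%E.
  by move=> z1; apply: ball_gt; rewrite closed_ballE.
have cone := convex_cone_minorant Phi_cvx Phi_z0 ball_gt.
have B_ge0 : 0 <= f0 - m.
  by have := ball_gt z0; rewrite subrr normr0 Phi_z0 lte_fin => /(_ ler01); lra.
exists (shifted_env Phi); split; split.
- exact: shifted_env_neqNy Phi_z0 B_ge0 cone.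
- exact: shifted_env_lsc Phi_z0 B_ge0 cone Phi_cvx Phi_lsc.
- exact: shifted_env_convex Phi_z0 B_ge0 cone Phi_cvx.
- exact: shifted_env0.
- by move=> x y; exact: (shifted_env_fin_num Phi_z0 B_ge0 cone y).
- by move=> y x1 x2; exact: (shifted_env_decr Phi_z0 B_ge0 cone y).
- by move=> y; exact: (shifted_env_cvg0 Phi_z0 B_ge0 cone Phi_lsc (y := y)).
Qed.
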